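(* Let $A\in\mathbb{T}^{n\times d}$ and $b\in\mathbb{T}^n$, let $B$ be a tropical basis of the system $A\odot x=b$, and let $j\in[d]\setminus B$ be such that the $j$-th column of $A$ has at least one entry different from $-\infty$. Then there exists a tropical basis $B'\subset B\cup\{j\}$ with $B'\neq B$. Moreover, if the instance $(A,b)$ is nondegenerate, this basis $B'$ is unique.
   Context: $\mathbb{T}=\mathbb{R}\cup\{-\infty\}$, $\oplus=\max$, $\odot=+$, $(A\odot x)_i=\max_j(A_{ij}+x_j)$; conventions $a-(-\infty)=+\infty$ for $a\in\mathbb{T}$. A tropical (feasible) basis of $A\odot x=b$, $x\in\mathbb{T}^d$, is a subset $B\subset[d]$ of cardinality $n$ for which there is a bijection $\phi:[n]\to B$ such that for every $i\in[n]$, $b_i-A_{i\phi(i)}\in\mathbb{T}$ and it is minimal among $b_k-A_{k\phi(i)}$, $k\in[n]$. Such a basis is nondegenerate if for each $i\in[n]$ the minimum $\min_k(b_k-A_{k\phi(i)})$ is a real number attained by a unique $k$. The instance $(A,b)$ is nondegenerate if all its tropical bases are nondegenerate. *)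

From HB Require Import structures.
From mathcomp Require Import all_boot all_order all_algebra.
From mathcomp Require Import reals constructive_ereal.
Set Implicit Arguments. Unset Strict Implicit. Unset Printing Implicit Defensive.
Import Order.TTheory GRing.Theory Num.Theory.
Local Open Scope ring_scope.
Local Open Scope ereal_scope.

(* Tropical numbers T = R ∪ {-oo}: [None] is -oo, [Some r] is the real r. *)
Definition trop (R : realType) := option R.

(* a - c for a, c in T, valued in T ∪ {+oo} (inside \bar R), with the
   convention a - (-oo) = +oo for every a in T (including a = -oo). *)
Definition tdiff (R : realType) (a c : trop R) : \bar R :=
  match c with
  | None => +oo
  | Some c' => match a with
               | None => -oo
               | Some a' => (a' - c')%R%:E
               end
  end.

Definition tropical_basis (R : realType) (n d : nat)
    (A : 'M[trop R]_(n, d)) (b : 'I_n -> trop R) (B : {set 'I_d}) : Prop :=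
  #|B| = n /\
  exists phi : 'I_n -> 'I_d,
    [/\ injective phi, [set phi i | i : 'I_n] = B &
        forall i : 'I_n,
          tdiff (b i) (A i (phi i)) != +oo /\
          forall k : 'I_n, tdiff (b i) (A i (phi i)) <= tdiff (b k) (A k (phi i))].

Definition nondegenerate_basis (R : realType) (n d : nat)
    (A : 'M[trop R]_(n, d)) (b : 'I_n -> trop R) (B : {set 'I_d}) : Prop :=
  forall c, c \in B ->
    exists k : 'I_n,
      tdiff (b k) (A k c) \is a fin_num /\
      forall k' : 'I_n, k' != k -> tdiff (b k) (A k c) < tdiff (b k') (A k' c).

Definition nondegenerate_instance (R : realType) (n d : nat)
    (A : 'M[trop R]_(n, d)) (b : 'I_n -> trop R) : Prop :=
  forall B, tropical_basis A b B -> nondegenerate_basis A b B.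

From mathcomp Require Import all_boot all_order all_algebra.
From mathcomp Require Import reals constructive_ereal.

(* Let phi be the row-to-column matching of B. Take a row s minimising
   b_k - A_{kj} over k; since column j is not identically -oo this minimum
   is finite, so rematching s to j gives a basis B' containing j, hence
   different from B. Conversely, a basis B'' <> B inside B ∪ {j} of the same
   size must contain j. In a nondegenerate instance the minimum of every
   column of a basis is attained at a single row, so the row matched to j in
   B'' is s and every other row is matched as in B: hence B'' = B'. *)

Set Implicit Arguments.
Unset Strict Implicit.
Unset Printing Implicit Defensive.

Import Order.TTheory.
Local Open Scope ereal_scope.

Lemma subsetU1_neq_mem (T : finType) (x : T) (S U : {set T}) :
  S \subset x |: U -> (#|U| <= #|S|)%N -> S != U -> x \in S.
Proof.
move=> sSxU leUS; apply: contraNT => xNS.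
rewrite eqEcard leUS andbT; apply/subsetP => y yS.
move/subsetP: sSxU => /(_ y yS); rewrite in_setU1.
by case/orP => // /eqP yx; rewrite -yx yS in xNS.
Qed.

Lemma tdiff_eq_pinfty (R : realType) (a c : trop R) :
  (tdiff a c == +oo) = (c == None).
Proof. by case: c => [c|] //; case: a. Qed.

Section ColumnMinimum.

Variables (R : realType) (n d : nat) (A : 'M[trop R]_(n, d)).
Variable b : 'I_n -> trop R.

Definition col_minimizer (c : 'I_d) (i : 'I_n) : Prop :=
  forall k, tdiff (b i) (A i c) <= tdiff (b k) (A k c).

Definition feasible_map (phi : 'I_n -> 'I_d) : Prop :=
  forall i, tdiff (b i) (A i (phi i)) != +oo /\ col_minimizer (phi i) i.

Lemma exists_col_minimizer (c : 'I_d) (i0 : 'I_n) :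
  exists i, col_minimizer c i.
Proof.
case: (@arg_minP _ _ _ i0 xpredT (fun i => tdiff (b i) (A i c)) isT).
by move=> i _ imin; exists i => k; apply: imin.
Qed.

Lemma col_minimizer_fin (c : 'I_d) (s i0 : 'I_n) :
  col_minimizer c s -> A i0 c != None -> tdiff (b s) (A s c) != +oo.
Proof.
move=> smin; rewrite -(tdiff_eq_pinfty (b i0)); apply: contra_neq => soo.
by have := smin i0; rewrite soo leye_eq => /eqP.
Qed.

Lemma col_minimizer_uniq (S : {set 'I_d}) (c : 'I_d) (i1 i2 : 'I_n) :
  nondegenerate_basis A b S -> c \in S ->
  col_minimizer c i1 -> col_minimizer c i2 -> i1 = i2.
Proof.
move=> ndS cS; have [k [_ kmin]] := ndS c cS.
suff eq_k i : col_minimizer c i -> i = k by move=> /eq_k -> /eq_k ->.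
move=> imin; apply/eqP; apply: contraT => /kmin.
by rewrite ltNge imin.
Qed.

Lemma tropical_basis_imset (phi : 'I_n -> 'I_d) :
  injective phi -> feasible_map phi ->
  tropical_basis A b [set phi i | i : 'I_n].
Proof.
move=> phiI phiF; split; first by rewrite card_imset // card_ord.
by exists phi.
Qed.

End ColumnMinimum.

Section Exchange.

Variables (R : realType) (n d : nat) (A : 'M[trop R]_(n, d)).
Variable b : 'I_n -> trop R.
Variables (phi : 'I_n -> 'I_d) (s : 'I_n) (j : 'I_d).

Definition exchange (i : 'I_n) : 'I_d := if i == s then j else phi i.

Local Notation B := [set phi i | i : 'I_n].
Local Notation B' := [set exchange i | i : 'I_n].

Hypotheses (phiI : injective phi) (phiF : feasible_map A b phi).
Hypothesis jNB : j \notin B.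
Hypotheses (sfin : tdiff (b s) (A s j) != +oo) (smin : col_minimizer A b j s).

Lemma exchange_inj : injective exchange.
Proof.
move=> x y; rewrite /exchange.
have phiB i : phi i \in B by apply: imset_f.
case: eqP => [->|_]; case: eqP => [->|_] //; last exact: phiI.
- by move=> jphi; move: jNB; rewrite jphi phiB.
- by move=> phij; move: jNB; rewrite -phij phiB.
Qed.

Lemma exchange_feasible : feasible_map A b exchange.
Proof.
move=> i; rewrite /exchange.
by have [->|_] := eqVneq i s; [split | apply: phiF].
Qed.

Lemma exchange_basis : tropical_basis A b B'.
Proof. exact: (tropical_basis_imset exchange_inj exchange_feasible). Qed.

Lemma mem_exchange : j \in B'.
Proof. by apply/imsetP; exists s; rewrite // /exchange eqxx. Qed.

Lemma exchange_sub : B' \subset j |: B.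
Proof.
apply/subsetP => _ /imsetP [i _ ->]; rewrite /exchange in_setU1.
by case: ifP => _; rewrite ?eqxx // (imset_f phi) ?orbT.
Qed.

Lemma exchange_basis_uniq (B'' : {set 'I_d}) :
  nondegenerate_instance A b ->
  tropical_basis A b B'' -> B'' \subset j |: B -> B'' != B -> B'' = B'.
Proof.
move=> nd basisB'' sB'' neqB''.
have ndB := nd _ (tropical_basis_imset phiI phiF).
have ndB' := nd _ exchange_basis.
case: basisB'' => cardB'' [psi [psiI psiB psiF]].
have jB'' : j \in B''.
  apply: subsetU1_neq_mem sB'' _ neqB''.
  by rewrite cardB'' card_imset // card_ord.
have psi_s : psi s = j.
  move: jB''; rewrite -psiB => /imsetP [i _ psij]; rewrite psij.
  congr psi; apply: (col_minimizer_uniq ndB' mem_exchange smin).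
  by rewrite psij; case: (psiF i).
rewrite -psiB; apply: eq_imset => i; rewrite /exchange.
case: eqP => [-> // | /eqP ins].
have : psi i \in j |: B by apply: (subsetP sB''); rewrite -psiB imset_f.
rewrite in_setU1 => /orP [/eqP psij | /imsetP [k _ psik]].
  by rewrite -psi_s in psij; rewrite (psiI _ _ psij) eqxx in ins.
rewrite psik; congr phi.
have [_ kmin] := phiF k; have [_ imin] := psiF i; rewrite psik in imin.
exact: (col_minimizer_uniq ndB (imset_f phi _) kmin imin).
Qed.

End Exchange.

Theorem lemma4p2 (R : realType) (n d : nat) (A : 'M[trop R]_(n, d))
    (b : 'I_n -> trop R) (B : {set 'I_d}) (j : 'I_d) :
  tropical_basis A b B ->
  j \notin B ->
  (exists i : 'I_n, A i j != None) ->
  exists B' : {set 'I_d},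
    [/\ tropical_basis A b B', B' \subset j |: B, B' != B &
        (nondegenerate_instance A b ->
         forall B'' : {set 'I_d},
           tropical_basis A b B'' -> B'' \subset j |: B -> B'' != B ->
           B'' = B')].
Proof.
move=> [_ [phi [phiI <- phiF]]] jNB [i0 Ai0j].
have [s smin] := exists_col_minimizer A b j i0.
have sfin := col_minimizer_fin smin Ai0j.
exists [set exchange phi s j i | i : 'I_n]; split.
- exact: exchange_basis.
- exact: exchange_sub.
- by apply: contraNneq jNB => <-; apply: mem_exchange.
- by move=> nd B''; apply: exchange_basis_uniq.
Qed.
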